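(* Let $M$ be a real symmetric $n\times n$ matrix with eigenvalues $\lambda_1\le\lambda_2\le\cdots\le\lambda_n$ (listed with multiplicity), and let $\Gamma=(G,\sigma)$, $G=(V,E)$, be its induced signed graph. Fix $k\in\{1,\dots,n\}$ and let $f_k$ be an eigenfunction with $Mf_k=\lambda_kf_k$. Then $$\mathfrak{S}(f_k)\le k+r-1\quad\text{and}\quad \mathfrak{W}(f_k)\le k+c-1,$$ where $r$ is the multiplicity of $\lambda_k$ and $c$ is the number of connected components of $G$. In particular, if $G$ is connected then $\mathfrak{W}(f_k)\le k$. If moreover $f_k$ has minimal support, then $\mathfrak{S}(f_k)\le k$.
   Context: All graphs are finite, simple and undirected. A signed graph $\Gamma=(G,\sigma)$ is a graph $G=(V,E)$ with a signature $\sigma:E\to\{+1,-1\}$; write $\sigma_{xy}=\sigma(\{x,y\})$ and $x\sim y$ if $\{x,y\}\in E$. The induced signed graph of a real symmetric $n\times n$ matrix $M=(M_{ij})$ has vertex set $V=\{x_1,\dots,x_n\}$, edge $\{x_i,x_j\}$ iff $i\ne j$ and $M_{ij}\neq0$, and sign $\sigma_{x_ix_j}=-M_{ij}/|M_{ij}|$. Functions $V\to\mathbb R$ are identified with vectors in $\mathbb R^n$; an eigenfunction is a nonzero eigenvector. An eigenfunction $f$ has minimal support if every eigenfunction $g$ for the same eigenvalue with $\mathrm{supp}(g)\subseteq\mathrm{supp}(f)$ satisfies $\mathrm{supp}(g)=\mathrm{supp}(f)$, where $\mathrm{supp}(f)=\{x: f(x)\ne0\}$. A walk is a sequence of vertices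 $y_1,\dots,y_m$ ($m\ge2$) with $y_j\sim y_{j+1}$ for all $j$. For $f:V\to\mathbb R$ let $\Omega=\{x\in V: f(x)\ne0\}$. An S-walk of $f$ is a walk with $f(y_j)\sigma_{y_jy_{j+1}}f(y_{j+1})>0$ for all $j$. A W-walk of $f$ is a walk such that for any two consecutive nonzeros $y_i,y_j$ ($i<j$, $f(y_i)\ne0\ne f(y_j)$, $f(y_l)=0$ for $i<l<j$) one has $f(y_i)\sigma_{y_iy_{i+1}}\cdots\sigma_{y_{j-1}y_j}f(y_j)>0$ (so every walk containing at most one nonzero of $f$ is a W-walk). On $\Omega$ define $x R_S y$ (resp. $x R_W y$) iff $x=y$ or some S-walk (resp. W-walk) of $f$ connects $x$ and $y$; these are equivalence relations. The strong nodal domains of $f$ are the induced subgraphs of $G$ on the $R_S$-classes, and $\mathfrak{S}(f)$ is their number. If $W_1,\dots,W_q$ are the $R_W$-classes, the weak nodal domains of $f$ are the induced subgraphs on $W_i^0=W_i\cup\{x\in V:\text{there is a W-walk of } f \text{ from } x \text{ to some vertex of } W_i\}$, and $\mathfrak{W}(f)=q$. *)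

From HB Require Import structures.
From mathcomp Require Import all_boot all_order all_algebra.
From mathcomp Require Import boolp reals.
Set Implicit Arguments. Unset Strict Implicit. Unset Printing Implicit Defensive.
Import Order.TTheory GRing.Theory Num.Theory.
Local Open Scope ring_scope.

Section SignedGraph.
Variables (R : realType) (n : nat) (M : 'M[R]_n).

Definition adj : rel 'I_n := fun i j => (i != j) && (M i j != 0).

Definition sgn_edge (i j : 'I_n) : R := - (M i j / `|M i j|).

(* A walk y_1 = x, y_2, ..., y_m (m >= 2), given as x :: p with p nonempty. *)
Definition is_walk (x : 'I_n) (p : seq 'I_n) : bool :=
  (p != [::]) && path adj x p.

Variable f : 'I_n -> R.

Definition Omega : {set 'I_n} := [set x | f x != 0].

Definition S_walk (x : 'I_n) (p : seq 'I_n) : bool :=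
  (p != [::]) &&
  path (fun a b => adj a b && (0 < f a * sgn_edge a b * f b)) x p.

Definition W_walk (x : 'I_n) (p : seq 'I_n) : Prop :=
  is_walk x p /\
  let w := x :: p in
  forall i j : nat, (i < j < size w)%N ->
    f (nth x w i) != 0 -> f (nth x w j) != 0 ->
    (forall l : nat, (i < l < j)%N -> f (nth x w l) = 0) ->
    0 < f (nth x w i) *
        (\prod_(i <= l < j) sgn_edge (nth x w l) (nth x w l.+1)) *
        f (nth x w j).

Definition RS (x y : 'I_n) : bool :=
  `[< x = y \/ (exists p, S_walk x p /\ last x p = y)
            \/ (exists p, S_walk y p /\ last y p = x) >].

Definition RW (x y : 'I_n) : bool :=
  `[< x = y \/ (exists p, W_walk x p /\ last x p = y)
            \/ (exists p, W_walk y p /\ last y p = x) >].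

Definition nclasses_on (e : rel 'I_n) : nat :=
  #|[set [set y in Omega | e x y] | x in Omega]|.

Definition nS : nat := nclasses_on RS.
Definition nW : nat := nclasses_on RW.

End SignedGraph.

Definition ncomp (R : realType) (n : nat) (M : 'M[R]_n) : nat :=
  #|[set [set y | connect (adj M) x y] | x : 'I_n]|.

Definition connectedG (R : realType) (n : nat) (M : 'M[R]_n) : Prop :=
  forall x y : 'I_n, connect (adj M) x y.

Definition vfun (R : realType) (n : nat) (v : 'cV[R]_n) : 'I_n -> R :=
  fun i => v i 0.

Definition supp (R : realType) (n : nat) (v : 'cV[R]_n) : {set 'I_n} :=
  [set i | v i 0 != 0].

Definition eigenfun (R : realType) (n : nat) (M : 'M[R]_n) (lam : R)
  (v : 'cV[R]_n) : Prop := v != 0 /\ M *m v = lam *: v.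

Definition minimal_support (R : realType) (n : nat) (M : 'M[R]_n) (lam : R)
  (v : 'cV[R]_n) : Prop :=
  forall g : 'cV[R]_n, eigenfun M lam g -> supp g \subset supp v ->
    supp g = supp v.

(* Diagonalize M as P M = diag(D) P. For the strong (resp. weak) nodal relation of
   f = f_k, the functions alpha * f with alpha constant on each nodal domain form a
   space of dimension the number q of domains, while the eigenvectors with
   eigenvalue >= lambda_k span a space of dimension >= n - k + 1; so the two meet
   in dimension >= q - k + 1. For h = alpha * f in the intersection, the Rayleigh
   gap <M h, h> - lambda_k |h|^2 is >= 0 since h lies in the upper spectral space,
   and it equals -1/2 sum_(x,y) (alpha x - alpha y)^2 f x M x y f y <= 0 since the
   edges joining different domains are not positive. Hence the gap vanishes:
   h is a lambda_k-eigenvector and alpha agrees across every edge joining two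
   vertices where f does not vanish. In the strong case the intersection thus
   lies in the lambda_k-eigenspace, of dimension r. In the weak case the
   eigen-equations of f and h at the zeros of f carry alpha across runs of zeros,
   so alpha is constant on each connected component and the intersection has
   dimension <= c. Under minimal support, a two-dimensional intersection would
   contain h - alpha(x0) f, an eigenvector vanishing at x0 with support inside
   supp f. *)

From HB Require Import structures.
From mathcomp Require Import all_boot all_order all_algebra.
From mathcomp Require Import boolp reals.
From mathcomp Require Import zify ring lra.
Import Order.TTheory GRing.Theory Num.Theory.
Local Open Scope ring_scope.
Set Implicit Arguments. Unset Strict Implicit. Unset Printing Implicit Defensive.

Lemma sum_eq0_exists_lt0 (R : realDomainType) (I : finType) (F : I -> R) i :
  \sum_j F j = 0 -> F i != 0 -> exists j, F j < 0.
Proof.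
move=> F0 Fi; apply/existsP; apply: contraNT Fi; rewrite negb_exists => /forallP F_ge0.
have {}F_ge0 j : 0 <= F j by rewrite leNgt F_ge0.
by apply/eqP; move: F0 => /(psumr_eq0P (fun j _ => F_ge0 j)); apply.
Qed.

Lemma lt0_mul_gt0 (R : realDomainType) (a b c : R) : a * b < 0 -> a * c < 0 -> 0 < b * c.
Proof. by move=> ab ac; nra. Qed.

Lemma sorted_count_ge_nth (R : realDomainType) (s : seq R) i : sorted <=%R s ->
  (i < size s)%N -> (size s - i <= count (fun x => (nth 0 s i <= x)%R) s)%N.
Proof.
move=> s_sorted i_lt; rewrite -[X in count _ X](cat_take_drop i) count_cat -size_drop.
apply: leq_trans (leq_addl _ _); rewrite (_ : count _ _ = size (drop i s)) //.
apply/eqP; rewrite -all_count; apply/allP => x /(nthP 0)[j]; rewrite size_drop => j_lt <-.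
rewrite nth_drop; apply: (sorted_leq_nth le_trans lexx 0 s_sorted); rewrite ?inE ?leq_addr //.
by rewrite -ltn_subRL; exact: j_lt.
Qed.

Lemma card_perm_count (R : eqType) n (D : 'I_n -> R) (Q : pred R) s :
  perm_eq s [seq D i | i <- enum 'I_n] -> #|[set i | Q (D i)]| = count Q s.
Proof.
by move/permP ->; rewrite enumT count_map cardsE cardE /enum_mem size_filter.
Qed.

Section SymmetricDiagonalization.
Variable R : realFieldType.

Lemma trmxX n (A : 'M[R]_n.+1) k : (A ^+ k)^T = A^T ^+ k.
Proof.
elim: k => [|k IH]; first by rewrite !expr0 trmx1.
by rewrite exprS exprSr -mulmxE trmx_mul IH.
Qed.

Lemma horner_mx_trmx n (A : 'M[R]_n.+1) p : (horner_mx A p)^T = horner_mx A^T p.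
Proof.
elim/poly_ind: p => [|p c IH]; first by rewrite !rmorph0 trmx0.
rewrite !(rmorphD, rmorphM) /= !horner_mx_X !horner_mx_C linearD /= tr_scalar_mx.
by rewrite -!mulmxE trmx_mul IH (comm_horner_mx _ (erefl : comm_mx A^T A^T)).
Qed.

Lemma sym_sqr_eq0 n (S : 'M[R]_n.+1) : S^T = S -> S * S = 0 -> S = 0.
Proof.
move=> S_sym SS0; apply/matrixP => i j; rewrite mxE.
have Sji l : S l i = S i l by rewrite -[in LHS]S_sym mxE.
have := congr1 (fun A : 'M_n.+1 => A i i) SS0; rewrite -mulmxE !mxE.
under eq_bigr do rewrite Sji -expr2.
by move/(psumr_eq0P (fun l _ => sqr_ge0 (S i l)))/(_ j isT)/eqP; rewrite sqrf_eq0 => /eqP.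
Qed.

Lemma sym_nilpotent_eq0 n (S : 'M[R]_n.+1) k : S^T = S -> S ^+ k.+1 = 0 -> S = 0.
Proof.
move=> S_sym; elim: k => [|k IH] Sk0; first by rewrite -[S]expr1.
apply: IH; apply: sym_sqr_eq0; first by rewrite trmxX S_sym.
by rewrite -exprD (_ : (k.+1 + k.+1 = k.+2 + k)%N) ?exprD ?Sk0 ?mul0r //; lia.
Qed.

Lemma char_poly_similar n (P A : 'M[R]_n) : P \in unitmx ->
  char_poly (invmx P *m A *m P) = char_poly A.
Proof.
move=> P_unit; rewrite /char_poly /char_poly_mx.
set Pi := map_mx polyC (invmx P); set Pp := map_mx polyC P.
have PiP : Pi *m Pp = 1%:M by rewrite -map_mxM mulVmx // map_mx1.
have eX : 'X%:M = Pi *m 'X%:M *m Pp :> 'M[{poly R}]_n.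
  by rewrite scalar_mxC -mulmxA PiP mulmx1.
rewrite {1}eX !map_mxM -/Pi -/Pp -mulmxBl -mulmxBr !det_mulmx mulrAC -det_mulmx.
by rewrite PiP det1 mul1r.
Qed.

Lemma size_char_roots n (M : 'M[R]_n) s :
  char_poly M = \prod_(x <- s) ('X - x%:P) -> size s = n.
Proof. by move=> M_char; have := size_char_poly M; rewrite M_char size_prod_XsubC => -[]. Qed.

Lemma horner_mx_sym_radical n (M : 'M[R]_n.+1) s :
  M^T = M -> char_poly M = \prod_(x <- s) ('X - x%:P) ->
  horner_mx M (\prod_(a <- undup s) ('X - a%:P)) = 0.
Proof.
move=> M_sym M_char; set q := \prod_(a <- undup s) _.
have dvd_q t : all (mem s) t -> \prod_(x <- t) ('X - x%:P) %| q ^+ size t.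
  elim: t => [|x t IH] /=; first by rewrite big_nil dvd1p.
  case/andP=> xs ts; rewrite big_cons exprS; apply: dvdp_mul; last exact: IH.
  by rewrite dvdp_XsubCl root_prod_XsubC mem_undup.
have char_q : char_poly M %| q ^+ n.+1.
  by rewrite M_char -[X in q ^+ X](size_char_roots M_char) dvd_q //; apply/allP.
have [r r_q] := dvdpP _ _ char_q.
apply: (sym_nilpotent_eq0 (k := n)); first by rewrite horner_mx_trmx M_sym.
by rewrite -rmorphXn r_q rmorphM /= Cayley_Hamilton mulr0.
Qed.

Lemma sym_split_diagonalizable n (M : 'M[R]_n) s :
  M^T = M -> char_poly M = \prod_(x <- s) ('X - x%:P) ->
  exists P : 'M[R]_n, exists D : 'rV[R]_n,
  [/\ P \in unitmx, P *m M = diag_mx D *m P & perm_eq s [seq D 0 i | i <- enum 'I_n]].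
Proof.
case: n M => [|n] M M_sym M_char.
  exists 1%:M, 0; rewrite unitmx1 !thinmx0; split => //.
  by move: (size_char_roots M_char); case: s M_char => // _ _; rewrite enum_ord0.
have : exists2 P : 'M_n.+1, P \in unitmx & similar_diag P M.
  apply/diagonalizableP; exists (undup s); first exact: undup_uniq.
  exact/mxminpoly_min/horner_mx_sym_radical.
case=> P P_unit /(similar_diagLR P_unit)[D MD]; rewrite conjVmx // in MD.
exists P, D; split => //; first by rewrite [in LHS]MD !mulmxA mulmxV // mul1mx.
apply: prod_XsubC_eq; rewrite -M_char MD char_poly_similar // char_poly_trig ?diag_mx_is_trig //.
by rewrite big_map big_enum; apply: eq_bigr => i _; rewrite mxE eqxx.
Qed.

End SymmetricDiagonalization.

Section SignedWalks.
Variables (R : realType) (n : nat) (M : 'M[R]_n).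
Hypothesis M_sym : M^T = M.
Variable f : 'I_n -> R.

Lemma sym_entry x y : M x y = M y x.
Proof. by rewrite -[in LHS]M_sym mxE. Qed.

Lemma adj_sym x y : adj M x y = adj M y x.
Proof. by rewrite /adj eq_sym sym_entry. Qed.

Lemma sgn_edge_sym x y : sgn_edge M x y = sgn_edge M y x.
Proof. by rewrite /sgn_edge sym_entry. Qed.

Lemma last_rev_belast (x : 'I_n) p : last (last x p) (rev (belast x p)) = x.
Proof. by rewrite -[last _ _]/(last x (last x p :: _)) -rev_rcons -lastI rev_cons last_rcons. Qed.

Lemma S_walk_rev x p : S_walk M f x p -> S_walk M f (last x p) (rev (belast x p)).
Proof.
case/andP=> p_nil p_path; apply/andP; split.
  by case: p p_nil {p_path} => //= y p _; rewrite rev_cons; case: (rev _).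
rewrite rev_path; apply: sub_path p_path => a b /andP[ab pos].
by rewrite adj_sym ab sgn_edge_sym mulrC [f b * _]mulrC mulrA.
Qed.

Lemma S_walk_cat x p q :
  S_walk M f x p -> S_walk M f (last x p) q -> S_walk M f x (p ++ q).
Proof.
case/andP=> p_nil p_path /andP[_ q_path]; apply/andP; split.
  by case: p p_nil {p_path q_path}.
by rewrite cat_path p_path q_path.
Qed.

Definition sgn_prod (w : seq 'I_n) (x : 'I_n) (i j : nat) : R :=
  \prod_(i <= l < j) sgn_edge M (nth x w l) (nth x w l.+1).

Lemma sgn_prod_rev (w : seq 'I_n) x y i j : (i <= j < size w)%N ->
  sgn_prod (rev w) y i j = sgn_prod w x (size w - j.+1) (size w - i.+1).
Proof.
move=> /andP[ij jw]; rewrite /sgn_prod [RHS]big_nat_rev.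
rewrite -[i]add0n big_addn -[(size w - j.+1)%N]add0n big_addn.
rewrite (_ : (size w - i.+1 - (size w - j.+1) = j - i)%N); last by lia.
apply: eq_big_nat => l /andP[_ lji]; rewrite sgn_edge_sym !nth_rev; try lia.
by congr sgn_edge; rewrite [LHS](set_nth_default x); try congr nth; lia.
Qed.

Lemma W_walk_rev x p : W_walk M f x p -> W_walk M f (last x p) (rev (belast x p)).
Proof.
case=> /andP[p_nil p_path] Wx; split.
  apply/andP; split.
    by case: p p_nil {p_path Wx} => //= y p _; rewrite rev_cons; case: (rev _).
  by rewrite rev_path; apply: sub_path p_path => a b /=; rewrite adj_sym.
have rev_w : last x p :: rev (belast x p) = rev (x :: p) by rewrite [in RHS]lastI rev_rcons.
rewrite rev_w /= size_rev /= => i j /andP[ij jp] fi fj Z.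
have nth_w l : (l <= size p)%N -> nth (last x p) (rev (x :: p)) l = nth x (x :: p) (size p - l).
  by move=> lp; rewrite nth_rev /= ?subSS //; apply: set_nth_default => /=; lia.
move: fi fj Z; rewrite !nth_w; try lia.
move=> fi fj Z; rewrite mulrC [X in _ * X]mulrC mulrA.
rewrite -/(sgn_prod (rev (x :: p)) (last x p) i j) (sgn_prod_rev x) /= ?subSS; last by lia.
apply: Wx => /=; try lia.
move=> l /andP[jl li]; have := Z (size p - l)%N; rewrite nth_w; last by lia.
by rewrite (_ : (size p - (size p - l) = l)%N); [apply; lia | lia].
Qed.

Lemma sgn_prod_shift (w w' : seq 'I_n) x x' d i j :
  (forall l, (i <= l <= j)%N -> nth x w (l + d) = nth x' w' l) ->
  sgn_prod w x (i + d) (j + d) = sgn_prod w' x' i j.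
Proof.
move=> ww'; rewrite /sgn_prod big_addn addnK.
apply: eq_big_nat => l /andP[il lj]; rewrite -addSn !ww' //; lia.
Qed.

Lemma W_walk_cat x p q : W_walk M f x p -> f (last x p) != 0 ->
  W_walk M f (last x p) q -> W_walk M f x (p ++ q).
Proof.
case=> /andP[p_nil p_path] Wp fy [/andP[q_nil q_path] Wq]; split.
  rewrite /is_walk cat_path p_path q_path andbT.
  by case: p p_nil {p_path Wp fy Wq q_path}.
set y := last x p in fy Wq q_path *; set m := size p.
(* The shift [+ 0] lets [nth_l] feed [sgn_prod_shift], like [nth_r]. *)
have nth_l l : (l <= m)%N -> nth x (x :: p ++ q) (l + 0) = nth x (x :: p) l.
  by move=> lm; rewrite addn0 -cat_cons nth_cat /= ltnS lm.
have nth_r l : (l <= size q)%N -> nth x (x :: p ++ q) (l + m) = nth y (y :: q) l.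
  case: l => [_|l lq]; first by rewrite add0n -[m]addn0 nth_l // /y (last_nth x).
  by rewrite addSn /= nth_cat ltnNge leq_addl /= addnK; apply: set_nth_default.
move=> /= i j /andP[ij]; rewrite size_cat ltnS => jw fi fj Z.
have [jm|mj] := leqP j m.
  move: fi fj Z; rewrite -(addn0 i) -(addn0 j) !nth_l ?(leq_trans (ltnW ij)) //.
  rewrite -/(sgn_prod _ x (i + 0) (j + 0)) (@sgn_prod_shift _ (x :: p) _ x).
    2: by move=> l /andP[_ lj]; apply: nth_l; lia.
  move=> fi fj Z; apply: Wp => //=; first by lia.
  by move=> l /andP[il lj]; rewrite -nth_l ?addn0 ?Z //; lia.
have [mi|im] := leqP m i.
  move: fi fj Z; rewrite -(subnK mi) -(subnK (ltnW mj)) !nth_r; try lia.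
  rewrite -/(sgn_prod _ x (i - m + m) (j - m + m)) (@sgn_prod_shift _ (y :: q) _ y).
    2: by move=> l /andP[_ lj]; apply: nth_r; lia.
  move=> fi fj Z; apply: Wq => //=; first by lia.
  by move=> l /andP[il lj]; rewrite -nth_r ?Z //; lia.
have nth_m : nth x (x :: p) m = y by rewrite /y (last_nth x).
suff : f y == 0 by rewrite (negPf fy).
by rewrite -nth_m -nth_l // addn0 Z //; lia.
Qed.
End SignedWalks.

Section NodalRelations.
Variables (R : realType) (n : nat) (M : 'M[R]_n).
Hypothesis M_sym : M^T = M.
Variable f : 'I_n -> R.

Lemma W_walk_segment x p : path (adj M) x p -> p != [::] ->
  f x != 0 -> f (last x p) != 0 ->
  (forall l, (0 < l < size p)%N -> f (nth x (x :: p) l) = 0) ->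
  0 < f x * sgn_prod M (x :: p) x 0 (size p) * f (last x p) -> W_walk M f x p.
Proof.
move=> p_path p_nil fx fl Z pos; split; first by apply/andP.
move=> /= i j /andP[ij jp] fi fj _.
have -> : i = 0%N by case: i ij fi => // i ij; rewrite Z ?eqxx //; lia.
have -> : j = size p by case: (ltngtP j (size p)) => // jp'; [rewrite Z ?eqxx // in fj|]; lia.
by rewrite -(last_nth x).
Qed.

Lemma sgn_prod_cons a b p :
  sgn_prod M [:: a, b & p] a 0 (size p).+1 = sgn_edge M a b * sgn_prod M (b :: p) b 0 (size p).
Proof.
rewrite /sgn_prod big_nat_recl //; congr (_ * _); apply: eq_big_nat => l /andP[_ lp] /=.
by congr sgn_edge; apply: set_nth_default => /=; lia.
Qed.

(* [RS M f x y] and [RW M f x y] are [`[< walk_rel (S_walk M f) x y >]] and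
   [`[< walk_rel (W_walk M f) x y >]]. *)
Definition walk_rel (walk : 'I_n -> seq 'I_n -> Prop) (x y : 'I_n) : Prop :=
  x = y \/ (exists p, walk x p /\ last x p = y) \/ (exists p, walk y p /\ last y p = x).

Lemma walk_rel_sym walk x y : walk_rel walk x y -> walk_rel walk y x.
Proof. by case=> [->|[]]; [left | right; right | right; left]. Qed.

Lemma walk_rel_trans (walk : 'I_n -> seq 'I_n -> Prop) :
  (forall x p, walk x p -> walk (last x p) (rev (belast x p))) ->
  (forall x p q, walk x p -> f (last x p) != 0 -> walk (last x p) q -> walk x (p ++ q)) ->
  forall x y z, f y != 0 -> walk_rel walk x y -> walk_rel walk y z -> walk_rel walk x z.
Proof.
move=> walk_rev walk_cat.
have forward x y : walk_rel walk x y -> x = y \/ exists p, walk x p /\ last x p = y.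
  case=> [->|[xy|[p [wp <-]]]]; [by left | by right | right].
  by exists (rev (belast y p)); rewrite last_rev_belast; split; first exact: walk_rev.
move=> x y z fy /forward[->//|[p [wp ep]]] /forward[<-|[q [wq <-]]]; subst y.
  by right; left; exists p.
by right; left; exists (p ++ q); rewrite last_cat; split; first exact: walk_cat.
Qed.

Lemma RS_refl x : RS M f x x.
Proof. by apply/asboolP; left. Qed.

Lemma RW_refl x : RW M f x x.
Proof. by apply/asboolP; left. Qed.

Lemma RS_sym x y : RS M f x y -> RS M f y x.
Proof. by move/asboolP/(walk_rel_sym (walk := S_walk M f))/asboolP. Qed.

Lemma RW_sym x y : RW M f x y -> RW M f y x.
Proof. by move/asboolP/(walk_rel_sym (walk := W_walk M f))/asboolP. Qed.

Lemma RS_trans x y z : f y != 0 -> RS M f x y -> RS M f y z -> RS M f x z.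
Proof.
move=> fy /asboolP xy /asboolP yz; apply/asboolP; move: fy xy yz.
apply: (walk_rel_trans (walk := S_walk M f)) => [|u p q up _]; first exact: S_walk_rev.
exact: S_walk_cat.
Qed.

Lemma RW_trans x y z : f y != 0 -> RW M f x y -> RW M f y z -> RW M f x z.
Proof.
move=> fy /asboolP xy /asboolP yz; apply/asboolP; move: fy xy yz.
by apply: (walk_rel_trans (walk := W_walk M f)); [exact: W_walk_rev | exact: W_walk_cat].
Qed.

Lemma RS_edge x y : adj M x y -> 0 < f x * sgn_edge M x y * f y -> RS M f x y.
Proof. by move=> xy pos; apply/asboolP; right; left; exists [:: y]; rewrite /S_walk /= xy pos. Qed.

Lemma RW_of_W_walk x p : W_walk M f x p -> RW M f x (last x p).
Proof. by move=> wp; apply/asboolP; right; left; exists p. Qed.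

Lemma RW_edge x y : adj M x y -> 0 < f x * sgn_edge M x y * f y -> RW M f x y.
Proof.
move=> xy pos; apply: (@RW_of_W_walk x [:: y]).
have fx : f x != 0 by apply: contraTneq pos => ->; rewrite !mul0r ltxx.
have fy : f y != 0 by apply: contraTneq pos => ->; rewrite mulr0 ltxx.
by apply: W_walk_segment => //=; [rewrite xy | case=> [|[]] | rewrite /sgn_prod big_nat1].
Qed.

Lemma RS_equiv : {in Omega f & &, equivalence_rel (RS M f)}.
Proof.
move=> x y z /[!inE] fx fy _; split=> [|xy]; first exact: RS_refl.
by apply/idP/idP => [xz|yz]; [exact: RS_trans fx (RS_sym xy) xz | exact: RS_trans fy xy yz].
Qed.

Lemma RW_equiv : {in Omega f & &, equivalence_rel (RW M f)}.
Proof.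
move=> x y z /[!inE] fx fy _; split=> [|xy]; first exact: RW_refl.
by apply/idP/idP => [xz|yz]; [exact: RW_trans fx (RW_sym xy) xz | exact: RW_trans fy xy yz].
Qed.

End NodalRelations.

Section QuadraticForm.
Variables (R : realType) (n : nat) (M : 'M[R]_n).
Hypothesis M_sym : M^T = M.

Definition eigen_eq (lam : R) (h : 'I_n -> R) : Prop :=
  forall x, \sum_y M x y * h y = lam * h x.

Lemma eq_eigen_eq lam h g : h =1 g -> eigen_eq lam h -> eigen_eq lam g.
Proof. by move=> hg h_eig x; rewrite -hg -h_eig; apply: eq_bigr => y _; rewrite hg. Qed.

Lemma eigen_eqP lam (v : 'cV[R]_n) : M *m v = lam *: v <-> eigen_eq lam (vfun v).
Proof.
split=> [Mv x | v_eig]; first by have := congr1 (fun w : 'cV_n => w x 0) Mv; rewrite !mxE.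
by apply/matrixP => x j; rewrite (ord1 j) !mxE -v_eig.
Qed.

Definition quad_form (h : 'I_n -> R) : R := \sum_x \sum_y h x * M x y * h y.

Definition sq_norm (h : 'I_n -> R) : R := \sum_x h x ^+ 2.

Lemma eigen_eq_tr lam h : eigen_eq lam h -> forall y, \sum_x h x * M x y = lam * h y.
Proof.
move=> h_eig y; rewrite -h_eig; apply: eq_bigr => x _.
by rewrite mulrC -[in LHS]M_sym mxE.
Qed.

Lemma quad_form_scaled_eigen f lam (al h : 'I_n -> R) : eigen_eq lam f ->
  (forall x, h x = al x * f x) ->
  2 * (quad_form h - lam * sq_norm h) =
  - \sum_x \sum_y (al x - al y) ^+ 2 * (f x * M x y * f y).
Proof.
move=> f_eig hE.
have sq_l : \sum_x \sum_y al x ^+ 2 * (f x * M x y * f y) = lam * sq_norm h.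
  rewrite mulr_sumr; apply: eq_bigr => x _.
  transitivity (al x ^+ 2 * f x * \sum_y M x y * f y).
    by rewrite mulr_sumr; apply: eq_bigr => y _; ring.
  by rewrite f_eig hE; ring.
have sq_r : \sum_x \sum_y al y ^+ 2 * (f x * M x y * f y) = lam * sq_norm h.
  rewrite exchange_big mulr_sumr; apply: eq_bigr => y _.
  transitivity (al y ^+ 2 * f y * \sum_x f x * M x y).
    by rewrite mulr_sumr; apply: eq_bigr => x _; ring.
  by rewrite (eigen_eq_tr f_eig) hE; ring.
have cross : \sum_x \sum_y al x * al y * (f x * M x y * f y) = quad_form h.
  by apply: eq_bigr => x _; apply: eq_bigr => y _; rewrite !hE; ring.
suff -> : \sum_x \sum_y (al x - al y) ^+ 2 * (f x * M x y * f y) =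
    lam * sq_norm h + lam * sq_norm h - 2 * quad_form h by ring.
rewrite -{1}sq_l -sq_r -cross -big_split /= mulr_sumr -sumrB; apply: eq_bigr => x _.
by rewrite -big_split /= mulr_sumr -sumrB; apply: eq_bigr => y _; ring.
Qed.


End QuadraticForm.

Section Eigenbasis.
Variables (R : realType) (n : nat) (M : 'M[R]_n).
Hypothesis M_sym : M^T = M.
Variables (P : 'M[R]_n) (D : 'rV[R]_n).
Hypotheses (P_unit : P \in unitmx) (P_diag : P *m M = diag_mx D *m P).
Variable lam : R.

Lemma row_eigen i y : \sum_x P i x * M x y = D 0 i * P i y.
Proof.
have := congr1 (fun A : 'M_n => A i y) P_diag; rewrite mul_diag_mx !mxE => <-.
by apply: eq_bigr.
Qed.

Definition gram i j : R := \sum_y P i y * P j y.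

Lemma gram_eigen_orth i j : (D 0 i - D 0 j) * gram i j = 0.
Proof.
have ij_l : \sum_y (\sum_x P i x * M x y) * P j y = D 0 i * gram i j.
  by rewrite /gram mulr_sumr; apply: eq_bigr => y _; rewrite row_eigen mulrA.
have ij_r : \sum_y (\sum_x P i x * M x y) * P j y = D 0 j * gram i j.
  under eq_bigr do rewrite mulr_suml.
  rewrite exchange_big /gram mulr_sumr; apply: eq_bigr => x _ /=.
  transitivity (P i x * \sum_y P j y * M y x).
    by rewrite mulr_sumr; apply: eq_bigr => y _; rewrite (sym_entry M_sym x y); ring.
  by rewrite row_eigen; ring.
by rewrite mulrBl -ij_l -ij_r subrr.
Qed.

Definition comb (b : 'rV[R]_n) (y : 'I_n) : R := (b *m P) 0 y.

Lemma comb_dot a b :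
  \sum_y comb a y * comb b y = \sum_i \sum_j a 0 i * b 0 j * gram i j.
Proof.
rewrite /comb; under eq_bigr do rewrite !mxE mulr_suml.
rewrite exchange_big; apply: eq_bigr => i _ /=.
under eq_bigr do rewrite mulr_sumr.
rewrite exchange_big; apply: eq_bigr => j _ /=.
by rewrite /gram mulr_sumr; apply: eq_bigr => y _; ring.
Qed.

Lemma quad_form_comb b : quad_form M (comb b) - lam * sq_norm (comb b) =
  \sum_i \sum_j (D 0 i - lam) * b 0 i * b 0 j * gram i j.
Proof.
have -> : quad_form M (comb b) = \sum_y comb (\row_i (D 0 i * b 0 i)) y * comb b y.
  rewrite /quad_form exchange_big; apply: eq_bigr => y _ /=.
  rewrite -mulr_suml; congr (_ * _).
  rewrite /comb !mxE; under eq_bigr do rewrite !mxE mulr_suml.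
  rewrite exchange_big; apply: eq_bigr => i _ /=.
  under eq_bigr do rewrite -mulrA.
  by rewrite -mulr_sumr row_eigen mxE mulrCA mulrA.
rewrite /sq_norm; under [X in lam * X]eq_bigr do rewrite expr2.
rewrite !comb_dot mulr_sumr -sumrB; apply: eq_bigr => i _.
by rewrite mulr_sumr -sumrB; apply: eq_bigr => j _; rewrite !mxE; ring.
Qed.

Lemma quad_form_comb_sqr (b : 'rV[R]_n) : (forall i, D 0 i < lam -> b 0 i = 0) ->
  quad_form M (comb b) - lam * sq_norm (comb b) =
  sq_norm (comb (\row_i (b 0 i * Num.sqrt (D 0 i - lam)))).
Proof.
move=> b_ge; rewrite quad_form_comb /sq_norm; under [RHS]eq_bigr do rewrite expr2.
rewrite comb_dot; apply: eq_bigr => i _; apply: eq_bigr => j _; rewrite !mxE.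
have [->|gram_ij] := eqVneq (gram i j) 0; first by rewrite !mulr0.
(* [gram i j] vanishes unless [D 0 i = D 0 j], so [D 0 i - lam] can be split into
   the two square roots on the support of [gram]. *)
have Dij : D 0 j = D 0 i.
  have /eqP := gram_eigen_orth i j.
  by rewrite mulf_eq0 (negPf gram_ij) orbF subr_eq0 eq_sym => /eqP.
have [->|bi] := eqVneq (b 0 i) 0; first by rewrite !(mulr0, mul0r).
have Di : 0 <= D 0 i - lam by rewrite subr_ge0 leNgt; apply: contra bi => /b_ge ->.
rewrite Dij -[D 0 i - lam in LHS](sqr_sqrtr Di); ring.
Qed.

Lemma quad_form_comb_ge0 (b : 'rV[R]_n) : (forall i, D 0 i < lam -> b 0 i = 0) ->
  0 <= quad_form M (comb b) - lam * sq_norm (comb b).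
Proof. by move/quad_form_comb_sqr ->; apply: sumr_ge0 => y _; apply: sqr_ge0. Qed.

Lemma quad_form_comb_eq0 (b : 'rV[R]_n) : (forall i, D 0 i < lam -> b 0 i = 0) ->
  quad_form M (comb b) - lam * sq_norm (comb b) = 0 -> forall i, D 0 i != lam -> b 0 i = 0.
Proof.
move=> b_ge; rewrite quad_form_comb_sqr // => /(psumr_eq0P (fun y _ => sqr_ge0 _)) sq0 i Di.
set g := \row_i _ in sq0.
have : g *m P = 0.
  by apply/rowP => y; have /eqP := sq0 y isT; rewrite sqrf_eq0 /comb !mxE => /eqP.
move/eqP; rewrite mulmx_free_eq0 ?row_free_unit // => /eqP/rowP/(_ i)/eqP.
rewrite !mxE mulf_eq0 sqrtr_eq0 subr_le0 => /orP[/eqP //| Dle].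
by apply: b_ge; rewrite lt_neqAle Di.
Qed.

Lemma comb_eigen (b : 'rV[R]_n) : (forall i, D 0 i != lam -> b 0 i = 0) -> eigen_eq M lam (comb b).
Proof.
move=> b_eq x; rewrite /comb mxE mulr_sumr.
under eq_bigr do rewrite mxE mulr_sumr.
rewrite exchange_big; apply: eq_bigr => i _ /=.
have [->|bi] := eqVneq (b 0 i) 0; first by rewrite mul0r mulr0 big1 // => y _; rewrite !mul0r mulr0.
have /eqP Di : D 0 i == lam by apply: contraNT bi => /b_eq ->.
rewrite -Di -mulrCA -row_eigen mulr_sumr; apply: eq_bigr => y _.
by rewrite (sym_entry M_sym x y); ring.
Qed.

Definition eig_ge : {set 'I_n} := [set i | lam <= D 0 i].

Definition eig_eq : {set 'I_n} := [set i | D 0 i == lam].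

Definition eigen_span (S : {set 'I_n}) : 'M[R]_(#|S|, n) := rowsub enum_val P.

Lemma eigen_span_coef (S : {set 'I_n}) (h : 'rV[R]_n) : (h <= eigen_span S)%MS ->
  exists2 b : 'rV[R]_n, h = b *m P & forall i, i \notin S -> b 0 i = 0.
Proof.
case/submxP => a ->; exists (a *m rowsub enum_val 1%:M).
  by rewrite /eigen_span rowsubE mulmxA.
move=> i iS; rewrite mxE big1 // => t _; rewrite !mxE.
by case: eqP => [ti|_]; [case/negP: iS; rewrite -ti enum_valP | rewrite mulr0].
Qed.

Lemma sub_eigen_span (S : {set 'I_n}) (b : 'rV[R]_n) : (forall i, i \notin S -> b 0 i = 0) ->
  (b *m P <= eigen_span S)%MS.
Proof.
move=> bS; suff -> : b = \row_(t < #|S|) b 0 (enum_val t) *m rowsub enum_val 1%:M.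
  by rewrite -mulmxA -rowsubE submxMl.
apply/rowP => i; rewrite mxE; have [iS|iS] := boolP (i \in S); last first.
  rewrite bS // big1 // => t _; rewrite !mxE.
  by case: eqP => [ti|_]; [case/negP: iS; rewrite -ti enum_valP | rewrite mulr0].
rewrite (bigD1 (enum_rank_in iS i)) //= big1 => [|t ti].
  by rewrite !mxE enum_rankK_in // eqxx mulr1 addr0.
rewrite !mxE; case: eqP; rewrite ?mulr0 // => ei.
by case/eqP: ti; apply: enum_val_inj; rewrite ei enum_rankK_in.
Qed.

Lemma rank_eigen_span (S : {set 'I_n}) : \rank (eigen_span S) = #|S|.
Proof.
rewrite /eigen_span rowsubE mxrankMfree ?row_free_unit //.
apply/eqP/row_freeP; exists (rowsub enum_val 1%:M)^T; apply/matrixP => t t'.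
rewrite !mxE (bigD1 (enum_val t)) //= big1 => [|i ti]; rewrite !mxE.
  by rewrite eqxx mul1r addr0 (inj_eq enum_val_inj) eq_sym.
by rewrite eq_sym (negPf ti) mul0r.
Qed.

Lemma eigen_span_eigen (h : 'rV[R]_n) : (h <= eigen_span eig_eq)%MS ->
  eigen_eq M lam (fun y => h 0 y).
Proof.
by case/eigen_span_coef => b -> b_eq; apply: comb_eigen => i Di; rewrite b_eq // inE.
Qed.

End Eigenbasis.

Section RestrictionMatrix.
Variables (R : realType) (n : nat) (f : 'I_n -> R) (blocks : {set {set 'I_n}}).

Definition restrict_mx : 'M[R]_(#|blocks|, n) :=
  \matrix_(j, x) (if x \in (enum_val j : {set 'I_n}) then f x else 0).

Definition block_coef (a : 'rV[R]_#|blocks|) (x : 'I_n) : R :=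
  \sum_j a 0 j * (x \in (enum_val j : {set 'I_n}))%:R.

Lemma restrict_mxE a x : (a *m restrict_mx) 0 x = block_coef a x * f x.
Proof.
rewrite !mxE /block_coef mulr_suml; apply: eq_bigr => j _; rewrite mxE.
by case: (x \in _); rewrite ?mulr1 ?mulr0 ?mul0r.
Qed.

Lemma block_coef_mem a B x (B_in : B \in blocks) : trivIset blocks -> x \in B ->
  block_coef a x = a 0 (enum_rank_in B_in B).
Proof.
move=> blocks_triv xB; rewrite /block_coef (bigD1 (enum_rank_in B_in B)) //= enum_rankK_in // xB.
rewrite mulr1 big1 ?addr0 // => j jB.
have jB' : enum_val j != B.
  by apply: contraNneq jB => jB; apply/eqP/enum_val_inj; rewrite enum_rankK_in.
have /disjoint_setI0/setP/(_ x) := trivIsetP blocks_triv _ _ (enum_valP j) B_in jB'.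
by rewrite !inE xB andbT => ->; rewrite mulr0.
Qed.

Lemma restrict_mx_free D : partition blocks D -> (forall x, x \in D -> f x != 0) ->
  row_free restrict_mx.
Proof.
move=> partD fD; rewrite -kermx_eq0; apply/eqP/row_matrixP => i; rewrite row0.
have /rowP a0 := congr1 (row i) (mulmx_ker restrict_mx); rewrite row_mul row0 in a0.
apply/rowP => j; rewrite [RHS]mxE; set a := row i _ in a0 *.
have B_in := enum_valP j; have /set0Pn[x xB] := partition_neq0 partD B_in.
have fx : f x != 0.
  by apply: fD; rewrite -(cover_partition partD); apply/bigcupP; exists (enum_val j).
have := a0 x; rewrite restrict_mxE (block_coef_mem _ B_in (partition_trivIset partD) xB).
rewrite enum_valK_in !mxE.
by move/eqP; rewrite mulf_eq0 (negPf fx) orbF => /eqP.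
Qed.

Lemma sub_restrict_mx D (h : 'rV[R]_n) (al : 'I_n -> R) : partition blocks D ->
  (forall x, f x != 0 -> x \in D) -> (forall x, h 0 x = al x * f x) ->
  (forall B x y, B \in blocks -> x \in B -> y \in B -> f x != 0 -> f y != 0 -> al x = al y) ->
  (h <= restrict_mx)%MS.
Proof.
move=> partD fD hE al_B; apply/submxP.
pose a := \row_(j < #|blocks|)
  (if [pick x in (enum_val j : {set 'I_n}) | f x != 0] is Some x then al x else 0).
exists a; apply/rowP => x; rewrite hE restrict_mxE.
have [->|fx] := eqVneq (f x) 0; first by rewrite !mulr0.
have xP : x \in cover blocks by rewrite (cover_partition partD) fD.
have B_in := pblock_mem xP; have xB : x \in pblock blocks x by rewrite mem_pblock.
rewrite (block_coef_mem _ B_in (partition_trivIset partD) xB) mxE enum_rankK_in //.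
case: pickP => [y /andP[yB fy]|none]; last by have := none x; rewrite xB fx.
by congr (_ * _); apply: (al_B _ _ _ B_in).
Qed.

End RestrictionMatrix.

Lemma sgn_edge_pos (R : realType) n (M : 'M[R]_n) (f : 'I_n -> R) x y : M x y != 0 ->
  (0 < f x * sgn_edge M x y * f y) = (f x * M x y * f y < 0).
Proof.
move=> Mxy; have Mxy_gt0 : 0 < `|M x y| by rewrite normr_gt0.
rewrite (_ : f x * sgn_edge M x y * f y = - (f x * M x y * f y) / `|M x y|).
  by rewrite pmulr_lgt0 ?invr_gt0 // oppr_gt0.
by rewrite /sgn_edge; ring.
Qed.

Section NodalCap.
Variables (R : realType) (n : nat) (M : 'M[R]_n).
Hypothesis M_sym : M^T = M.
Variables (f : 'I_n -> R) (lam : R).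
Hypothesis f_eig : eigen_eq M lam f.
Variables (P : 'M[R]_n) (D : 'rV[R]_n).
Hypotheses (P_unit : P \in unitmx) (P_diag : P *m M = diag_mx D *m P).
Variable e : rel 'I_n.
Hypothesis e_equiv : {in Omega f & &, equivalence_rel e}.
Hypothesis e_edge : forall x y, adj M x y -> 0 < f x * sgn_edge M x y * f y -> e x y.

Local Notation domains := (equivalence_partition e (Omega f)).

Definition nodal_cap := (restrict_mx f domains :&: eigen_span P (eig_ge D lam))%MS.

Lemma rank_nodal_cap : (nclasses_on f e + #|eig_ge D lam| <= \rank nodal_cap + n)%N.
Proof.
have /eqP rank_domains : row_free (restrict_mx f domains).
  by apply: (restrict_mx_free (equivalence_partitionP e_equiv)) => x; rewrite inE.
rewrite -[nclasses_on f e]rank_domains -(rank_eigen_span P_unit (eig_ge D lam)).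
by rewrite -mxrank_sum_cap addnC leq_add2l rank_leq_col.
Qed.

Lemma cut_term_ge0 (al : 'I_n -> R) x y :
  (forall x y, f x != 0 -> f y != 0 -> e x y -> al x = al y) ->
  0 <= (al x - al y) ^+ 2 * (f x * M x y * f y).
Proof.
move=> al_e.
have [->|fx] := eqVneq (f x) 0; first by rewrite !mul0r mulr0.
have [->|fy] := eqVneq (f y) 0; first by rewrite !mulr0.
have [->|xy] := eqVneq x y; first by rewrite subrr expr0n /= mul0r.
have [->|Mxy] := eqVneq (M x y) 0; first by rewrite mulr0 mul0r mulr0.
have [exy|not_exy] := boolP (e x y); first by rewrite (al_e x y) // subrr expr0n /= mul0r.
rewrite mulr_ge0 ?sqr_ge0 // leNgt -(sgn_edge_pos f) //.
by apply: contra not_exy; apply: e_edge; rewrite /adj xy Mxy.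
Qed.

Lemma nodal_cap_row (h : 'rV[R]_n) : (h <= nodal_cap)%MS -> exists al : 'I_n -> R,
  [/\ forall x, h 0 x = al x * f x,
      forall x y, f x != 0 -> f y != 0 -> e x y -> al x = al y,
      forall x y, f x != 0 -> f y != 0 -> adj M x y -> al x = al y &
      (h <= eigen_span P (eig_eq D lam))%MS].
Proof.
rewrite sub_capmx => /andP[/submxP[a ->] /eigen_span_coef[b hb b_ge]].
set al := block_coef a; exists al.
have hE x : comb P b x = al x * f x by rewrite /comb -hb restrict_mxE.
have al_e x y : f x != 0 -> f y != 0 -> e x y -> al x = al y.
  move=> fx fy xy; have [x_in y_in] : x \in Omega f /\ y \in Omega f by rewrite !inE.
  have part := equivalence_partitionP e_equiv; have triv := partition_trivIset part.
  have x_cov : x \in cover domains by rewrite (cover_partition part).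
  have B_in := pblock_mem x_cov.
  rewrite /al (block_coef_mem _ B_in triv) ?mem_pblock //.
  by rewrite (block_coef_mem _ B_in triv) // pblock_equivalence_partition.
have b_lt i : D 0 i < lam -> b 0 i = 0 by move=> Di; apply: b_ge; rewrite inE -ltNge.
have cut_ge0 : 0 <= \sum_x \sum_y (al x - al y) ^+ 2 * (f x * M x y * f y).
  by do 2![apply: sumr_ge0 => ? _]; apply: cut_term_ge0.
have gap := quad_form_scaled_eigen M_sym f_eig hE.
have gap0 : quad_form M (comb P b) - lam * sq_norm (comb P b) = 0.
  apply/eqP; rewrite eq_le (quad_form_comb_ge0 M_sym P_diag b_lt) andbT.
  by rewrite -(pmulr_rle0 _ (ltr0Sn _ 1)) gap oppr_le0.
split => //; first by move=> x; rewrite restrict_mxE.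
  move=> x y fx fy /andP[_ Mxy].
  have /eqP := gap; rewrite gap0 mulr0 eq_sym oppr_eq0 psumr_eq0 => [|? _]; last first.
    by apply: sumr_ge0 => ? _; apply: cut_term_ge0.
  move/allP/(_ x (mem_index_enum _))/implyP/(_ isT).
  rewrite psumr_eq0 => [|? _]; last exact: cut_term_ge0.
  move/allP/(_ y (mem_index_enum _))/implyP/(_ isT).
  by rewrite mulf_eq0 sqrf_eq0 subr_eq0 !mulf_eq0 (negPf fx) (negPf fy) (negPf Mxy) !orbF => /eqP.
rewrite hb; apply: sub_eigen_span => i; rewrite inE.
exact: (quad_form_comb_eq0 M_sym P_unit P_diag b_lt gap0).
Qed.

End NodalCap.

Section WeakPropagation.
Variables (R : realType) (n : nat) (M : 'M[R]_n).
Hypothesis M_sym : M^T = M.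
Variables (f : 'I_n -> R) (lam : R).
Hypothesis f_eig : eigen_eq M lam f.

(* For a zero [z] of [f], the fluxes [M z y * f y] into [z] sum to [0], being the
   terms of the eigen-equation at [z]. *)
Lemma sgn_edge_to_flux y z : f y * sgn_edge M y z = - (M z y * f y) / `|M z y|.
Proof. by rewrite /sgn_edge (sym_entry M_sym y z); ring. Qed.

Lemma adj_of_flux z y : f z = 0 -> M z y * f y != 0 -> adj M z y.
Proof.
move=> fz; rewrite mulf_eq0 negb_or => /andP[Mzy fy]; rewrite /adj Mzy andbT.
by apply: contraNneq fy => <-; rewrite fz.
Qed.

Lemma W_walk_zero_interior y zs w : f y != 0 -> all (fun z => f z == 0) zs -> f w != 0 ->
  path (adj M) y (rcons zs w) ->
  0 < f y * sgn_prod M (y :: rcons zs w) y 0 (size zs).+1 * f w -> W_walk M f y (rcons zs w).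
Proof.
move=> fy zs0 fw yw pos; apply: W_walk_segment; rewrite ?last_rcons ?size_rcons //.
  by case: (zs).
case=> [|l] /andP[l0 lzs]; first by rewrite ltnn in l0.
rewrite /= nth_rcons -ltnS lzs; apply/eqP; apply: (allP zs0); exact: mem_nth.
Qed.

Lemma RW_through_zero u z y : f z = 0 -> 0 < M z u * f u * (M z y * f y) -> RW M f u y.
Proof.
move=> fz pos.
have /norP[zu zy] : ~~ ((M z u * f u == 0) || (M z y * f y == 0)) by rewrite -mulf_eq0 gt_eqF.
have fu : f u != 0 by apply: contraNneq zu => ->; rewrite mulr0.
have fy : f y != 0 by apply: contraNneq zy => ->; rewrite mulr0.
apply: (@RW_of_W_walk _ _ _ _ u [:: z; y]); apply: (@W_walk_zero_interior u [:: z] y) => //=.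
- by rewrite fz eqxx.
- by rewrite adj_sym // !adj_of_flux.
rewrite /sgn_prod big_nat_recl // big_nat1 /= mulrA sgn_edge_to_flux -mulrA /sgn_edge.
set a := `|M z u|; set b := `|M z y|.
have a_gt0 : 0 < a by rewrite normr_gt0; apply: contraNneq zu => ->; rewrite mul0r.
have b_gt0 : 0 < b by rewrite normr_gt0; apply: contraNneq zy => ->; rewrite mul0r.
rewrite (_ : _ * _ = M z u * f u * (M z y * f y) / (a * b)); last by field; rewrite ?gt_eqF.
by apply: divr_gt0 => //; apply: mulr_gt0.
Qed.

Lemma sgn_prod_path_neq0 x p : path (adj M) x p -> sgn_prod M (x :: p) x 0 (size p) != 0.
Proof.
move=> xp; rewrite prodf_seq_neq0; apply/allP => l; rewrite mem_index_iota => /andP[_ lp].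
have /andP[_ Mxy] := (pathP x xp) l lp.
by rewrite /sgn_edge oppr_eq0 mulf_neq0 // invr_neq0 // normr_eq0.
Qed.

Lemma flux_nz_neq0 z y : M z y * f y != 0 -> f y != 0.
Proof. by apply: contraNneq => ->; rewrite mulr0. Qed.

Variable al : 'I_n -> R.
Hypothesis alf_eig : eigen_eq M lam (fun x => al x * f x).
Hypothesis al_RW : forall x y, f x != 0 -> f y != 0 -> RW M f x y -> al x = al y.
Hypothesis al_adj : forall x y, f x != 0 -> f y != 0 -> adj M x y -> al x = al y.

Lemma al_eq_at_zero z u u' : f z = 0 ->
  M z u * f u != 0 -> M z u' * f u' != 0 -> al u = al u'.
Proof.
(* Neighbours whose flux has the sign of that of [u] are W-linked to [u] through
   [z]; if [al u'] differed from [al u], the fluxes of the opposite sign would have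
   to sum to [0]. *)
move=> fz su su'; pose s y := M z y * f y.
have same y y' : s y != 0 -> 0 < s y * s y' -> al y = al y'.
  move=> sy pos; have sy' : s y' != 0 by apply: contraTneq pos => ->; rewrite mulr0 ltxx.
  by apply: al_RW; [exact: flux_nz_neq0 sy | exact: flux_nz_neq0 sy' | exact: (RW_through_zero fz)].
apply/eqP; apply: contraT => ne.
have neg : s u * s u' < 0.
  rewrite ltNge le_eqVlt eq_sym mulf_eq0 (negPf su) (negPf su') /=.
  by apply: contra ne => /(same _ _ su) ->.
have balance : \sum_y s y * (al y - al u) = 0.
  have -> : \sum_y s y * (al y - al u) = \sum_y M z y * (al y * f y) - al u * \sum_y s y.
    by rewrite mulr_sumr -sumrB; apply: eq_bigr => y _; rewrite /s; ring.
  by rewrite alf_eig f_eig fz !mulr0 subrr.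
have split_neg y : s y * (al y - al u) = (if s u * s y < 0 then s y else 0) * (al u' - al u).
  have [->|sy] := eqVneq (s y) 0; first by rewrite mul0r if_same mul0r.
  case: ltrgtP => [yneg|ypos|/eqP]; last by rewrite mulf_eq0 (negPf su) (negPf sy).
    by rewrite (same y u') // (lt0_mul_gt0 yneg).
  by rewrite (same y u) ?subrr ?mulr0 ?mul0r // mulrC.
have sum_neg : \sum_y (if s u * s y < 0 then s y * s u' else 0) = 0.
  move: balance; under eq_bigr do rewrite split_neg.
  rewrite -mulr_suml => /eqP; rewrite mulf_eq0 subr_eq0 [al u' == _]eq_sym (negPf ne) orbF.
  move/eqP=> sum0.
  transitivity ((\sum_y if s u * s y < 0 then s y else 0) * s u'); last by rewrite sum0 mul0r.
  by rewrite mulr_suml; apply: eq_bigr => y _; case: ifP; rewrite ?mul0r.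
have term_ge0 y : 0 <= if s u * s y < 0 then s y * s u' else 0.
  by case: ifPn => // yneg; rewrite ltW // (lt0_mul_gt0 yneg).
move/(psumr_eq0P (fun y _ => term_ge0 y))/(_ u' isT): sum_neg.
by rewrite neg => /eqP; rewrite mulf_eq0 orbb (negPf su').
Qed.

Lemma al_eq_across_zeros u z zs w : f u != 0 -> f z = 0 -> all (fun z => f z == 0) zs ->
  f w != 0 -> path (adj M) u (z :: rcons zs w) -> al u = al w.
Proof.
(* Some neighbour [y] of [z] has a flux of sign opposite to [K], which makes
   [y, z, zs, w] a W-walk, and [y] is tied to [u] by [al_eq_at_zero]. *)
move=> fu fz zs0 fw /= /andP[uz zw]; pose s y := M z y * f y.
set K := sgn_prod M (z :: rcons zs w) z 0 (size zs).+1 * f w.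
have K_neq0 : K != 0 by rewrite mulf_neq0 // -(size_rcons zs w) sgn_prod_path_neq0.
have su : s u != 0 by rewrite mulf_neq0 // -(sym_entry M_sym); case/andP: uz.
have [y yK] : exists y, s y * K < 0.
  apply: (@sum_eq0_exists_lt0 _ _ _ u); last by rewrite mulf_neq0.
  by rewrite -mulr_suml f_eig fz mulr0 mul0r.
have sy : s y != 0 by apply: contraTneq yK => ->; rewrite mul0r ltxx.
have fy := flux_nz_neq0 sy.
rewrite (al_eq_at_zero fz su sy); apply: al_RW => //.
have -> : w = last y (z :: rcons zs w) by rewrite /= last_rcons.
apply: RW_of_W_walk; apply: (@W_walk_zero_interior y (z :: zs) w) => //=.
- by rewrite fz eqxx.
- by rewrite adj_sym // adj_of_flux // zw.
rewrite -(size_rcons zs w) sgn_prod_cons size_rcons mulrA sgn_edge_to_flux -mulrA -/K.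
rewrite mulrAC mulNr; apply: divr_gt0; first by rewrite oppr_gt0.
by rewrite normr_gt0; apply: contraNneq sy; rewrite /s => ->; rewrite mul0r.
Qed.

Lemma al_eq_along_path p : forall u zs, f u != 0 -> all (fun z => f z == 0) zs ->
  path (adj M) u (zs ++ p) -> f (last u (zs ++ p)) != 0 -> al u = al (last u (zs ++ p)).
Proof.
elim: p => [|v p IH] u zs fu zs0 up; rewrite ?cats0.
  case/lastP: zs zs0 {up} => [//|zs z]; rewrite all_rcons last_rcons => /andP[fz _].
  by rewrite (eqP fz) eqxx.
have [fv|fv] := eqVneq (f v) 0.
  by rewrite -cat_rcons in up *; apply: IH; rewrite // all_rcons fv eqxx.
rewrite last_cat /= => fl; move: up; rewrite cat_path /= => /and3P[u_zs zs_v v_p].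
have -> : al u = al v.
  case: zs zs0 u_zs zs_v => [_ _ /= uv|z zs /= /andP[fz zs0] /andP[uz z_zs] zs_v].
    exact: al_adj.
  by apply: (al_eq_across_zeros fu (eqP fz) zs0 fv); rewrite /= uz -cats1 cat_path z_zs /= zs_v.
exact: (IH v [::]).
Qed.

Lemma al_eq_connect x y : f x != 0 -> f y != 0 -> connect (adj M) x y -> al x = al y.
Proof.
move=> fx fy /connectP[p xp yp]; subst y.
exact: (al_eq_along_path (zs := [::])).
Qed.

End WeakPropagation.

Section Components.
Variables (R : realType) (n : nat) (M : 'M[R]_n).
Hypothesis M_sym : M^T = M.

Local Notation components := (equivalence_partition (connect (adj M)) [set: 'I_n]).

Lemma connect_adj_equiv : {in [set: 'I_n] & &, equivalence_rel (connect (adj M))}.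
Proof.
move=> x y z _ _ _; split=> [|xy]; first exact: connect0.
have c_sym : connect_sym (adj M) by apply: sym_connect_sym => a b; rewrite adj_sym.
by apply/idP/idP => [xz|]; [rewrite c_sym in xy; exact: connect_trans xy xz | exact: connect_trans].
Qed.

Lemma ncomp_components : ncomp M = #|components|.
Proof.
apply: eq_card => B; apply/imsetP/imsetP => -[x _ ->]; exists x => //.
  by apply/setP => y; rewrite !inE.
by apply/setP => y; rewrite !inE.
Qed.

Lemma ncomp_connected : (0 < n)%N -> connectedG M -> ncomp M = 1%N.
Proof.
move=> n_gt0 M_conn; rewrite /ncomp (_ : [set _ | x : 'I_n] = [set setT]) ?cards1 //.
apply/setP => B; rewrite inE; apply/imsetP/eqP => [[x _ ->]|->].
  by apply/setP => y; rewrite !inE M_conn.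
by exists (Ordinal n_gt0) => //; apply/setP => y; rewrite !inE M_conn.
Qed.

End Components.

Section NodalBounds.
Variables (R : realType) (n : nat) (M : 'M[R]_n).
Hypothesis M_sym : M^T = M.
Variables (f : 'I_n -> R) (lam : R).
Hypothesis f_eig : eigen_eq M lam f.
Variables (P : 'M[R]_n) (D : 'rV[R]_n).
Hypotheses (P_unit : P \in unitmx) (P_diag : P *m M = diag_mx D *m P).

Lemma strong_nodal_bound : (nS M f + #|eig_ge D lam| <= #|eig_eq D lam| + n)%N.
Proof.
apply: leq_trans (rank_nodal_cap lam D P_unit (RS_equiv (f := f) M_sym)) _.
rewrite leq_add2r -(rank_eigen_span P_unit); apply: mxrankS; apply/row_subP => i.
by have [al [_ _ _ ->]] := nodal_cap_row M_sym f_eig P_unit P_diag (RS_equiv (f := f) M_sym)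
  (@RS_edge _ _ M f) (row_sub i _).
Qed.

Lemma weak_nodal_bound : (nW M f + #|eig_ge D lam| <= ncomp M + n)%N.
Proof.
apply: leq_trans (rank_nodal_cap lam D P_unit (RW_equiv (f := f) M_sym)) _.
rewrite leq_add2r ncomp_components //; apply: leq_trans (rank_leq_row (restrict_mx f _)).
apply: mxrankS; apply/row_subP => i.
have [al [hE al_RW al_adj /eigen_span_eigen h_eig]] := nodal_cap_row M_sym f_eig P_unit P_diag
  (RW_equiv (f := f) M_sym) (@RW_edge _ _ M f) (row_sub i _).
have alf_eig := eq_eigen_eq hE (h_eig M M_sym P_diag).
have part := equivalence_partitionP (connect_adj_equiv M_sym).
apply: (sub_restrict_mx part) hE _ => [x _|B x y B_in xB yB fx fy]; first by rewrite inE.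
apply: (al_eq_connect M_sym f_eig alf_eig al_RW al_adj) => //.
rewrite -(def_pblock (partition_trivIset part) B_in xB) in yB.
by rewrite pblock_equivalence_partition ?inE // in yB; exact: connect_adj_equiv.
Qed.

End NodalBounds.

Section MinimalSupport.
Variables (R : realType) (n : nat) (M : 'M[R]_n).
Hypothesis M_sym : M^T = M.
Variables (v : 'cV[R]_n) (lam : R).
Hypotheses (v_eig : eigenfun M lam v) (v_min : minimal_support M lam v).
Variables (P : 'M[R]_n) (D : 'rV[R]_n).
Hypotheses (P_unit : P \in unitmx) (P_diag : P *m M = diag_mx D *m P).

Local Notation f := (vfun v).

Lemma rank_nodal_cap_minimal : (\rank (nodal_cap f lam P D (RS M f)) <= 1)%N.
Proof.
have f_eig : eigen_eq M lam f by apply/eigen_eqP; case: v_eig.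
rewrite leqNgt; apply/negP => rank_gt1.
have [i hi] : exists i, ~~ (row i (nodal_cap f lam P D (RS M f)) <= v^T)%MS.
  apply/existsP; apply: contraTT rank_gt1; rewrite negb_exists => /forallP sub_v.
  rewrite -leqNgt; apply: leq_trans (rank_leq_row v^T); apply: mxrankS.
  by apply/row_subP => j; exact: negbNE (sub_v j).
set C := nodal_cap _ _ _ _ _ in hi; set h := row i C in hi.
have [al [hE _ _ /eigen_span_eigen h_eig]] := nodal_cap_row M_sym f_eig P_unit P_diag
  (RS_equiv (f := f) M_sym) (@RS_edge _ _ M f) (row_sub i C).
have hC x : C i x = al x * f x by rewrite -hE mxE.
have [x0 fx0] : exists x0, f x0 != 0.
  have [x0 fx0|f0] := pickP (fun x => f x != 0); first by exists x0.
  case/negP: v_eig.1; apply/eqP/matrixP => x j; rewrite (ord1 j) mxE.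
  by have /negbFE/eqP := f0 x.
pose g := h^T - al x0 *: v.
have gE x : g x 0 = (al x - al x0) * f x by rewrite !mxE hC /vfun; ring.
have g_eig : eigenfun M lam g.
  split.
    apply: contra hi => /eqP /subr0_eq h_v; rewrite -[h]trmxK h_v linearZ /=.
    by rewrite scalemx_sub.
  rewrite mulmxBr -scalemxAr; case: v_eig => _ ->; rewrite scalerBr scalerA mulrC -scalerA.
  congr (_ - _); apply/eigen_eqP; apply: eq_eigen_eq (h_eig M M_sym P_diag).
  by move=> y; rewrite /vfun !mxE.
have g_sub : supp g \subset supp v.
  by apply/subsetP => x; rewrite !inE gE mulf_eq0 negb_or => /andP[].
have := v_min g_eig g_sub; rewrite /supp => /setP/(_ x0).
by rewrite !inE gE subrr mul0r eqxx; move: fx0; rewrite /vfun => ->.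
Qed.

Lemma minimal_support_nodal_bound : (nS M f + #|eig_ge D lam| <= n.+1)%N.
Proof.
have f_eig : eigen_eq M lam f by apply/eigen_eqP; case: v_eig.
apply: leq_trans (rank_nodal_cap lam D P_unit (RS_equiv (f := f) M_sym)) _.
by rewrite -[n.+1]add1n leq_add2r; exact: rank_nodal_cap_minimal.
Qed.

End MinimalSupport.

Unset Implicit Arguments.
Set Strict Implicit.

Theorem theorem4p1 (R : realType) (n : nat) (M : 'M[R]_n) (s : seq R)
  (k : nat) (fk : 'cV[R]_n) :
  M^T = M ->
  sorted <=%R s ->
  char_poly M = \prod_(x <- s) ('X - x%:P) ->
  (0 < k <= n)%N ->
  eigenfun M (nth 0 s k.-1) fk ->
  let r := count_mem (nth 0 s k.-1) s in
  let c := ncomp M in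
  [/\ (nS M (vfun fk) <= k + r - 1)%N,
      (nW M (vfun fk) <= k + c - 1)%N,
      (connectedG M -> (nW M (vfun fk) <= k)%N) &
      (minimal_support M (nth 0 s k.-1) fk -> (nS M (vfun fk) <= k)%N)].
Proof.
move=> M_sym s_sorted M_char /andP[k_gt0 k_le_n] fk_eigfun r c.
set lam := nth 0 s k.-1 in fk_eigfun r *.
have f_eig : eigen_eq M lam (vfun fk) by apply/eigen_eqP; case: fk_eigfun.
have [P [D [P_unit P_diag s_D]]] := sym_split_diagonalizable M_sym M_char.
have card_eq : #|eig_eq D lam| = r by rewrite /eig_eq (card_perm_count (pred1 lam) s_D).
have card_ge : (n - k.-1 <= #|eig_ge D lam|)%N.
  rewrite /eig_ge (card_perm_count (fun x => lam <= x) s_D) -(size_char_roots M_char).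
  by apply: sorted_count_ge_nth; rewrite ?(size_char_roots M_char) //; lia.
have strong := strong_nodal_bound M_sym f_eig P_unit P_diag.
have weak := weak_nodal_bound M_sym f_eig P_unit P_diag.
split; [lia | lia | move=> M_conn | move=> fk_min].
  by move: weak; rewrite ncomp_connected //; [lia | lia].
have := minimal_support_nodal_bound M_sym fk_eigfun fk_min P_unit P_diag; lia.
Qed.
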